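(* Let $\omega\ge 2$ and let $\Gamma$ be an $\omega$-clique regular finite simple graph with maximum degree $\Delta(\Gamma)$. Then every adjacency eigenvalue $\lambda$ of $C_\omega(\Gamma)$ satisfies \[-\omega\le\lambda\le\omega\left(\frac{\Delta(\Gamma)}{\omega-1}-1\right).\]
   Context: A graph is $\omega$-clique regular if it has a nonempty edge set and every edge lies in exactly one clique of order $\omega$. The $\omega$-clique graph $C_\omega(\Gamma)$ has as vertices the cliques of order $\omega$ of $\Gamma$, two distinct ones adjacent iff they have nonempty intersection. *)

From HB Require Import structures.
From mathcomp Require Import all_boot all_order all_algebra.
Set Implicit Arguments. Unset Strict Implicit. Unset Printing Implicit Defensive.
Import Order.TTheory GRing.Theory Num.Theory.

Definition simple_graph (T : finType) (e : rel T) : Prop :=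
  symmetric e /\ irreflexive e.

Definition is_clique_of_order (T : finType) (e : rel T) (w : nat) (K : {set T}) : bool :=
  (#|K| == w) && [forall x in K, forall y in K, (x != y) ==> e x y].

Definition cliques_of_order (T : finType) (e : rel T) (w : nat) : {set {set T}} :=
  [set K : {set T} | is_clique_of_order e w K].

Definition clique_regular (T : finType) (e : rel T) (w : nat) : Prop :=
  (exists x y, e x y) /\
  forall x y, e x y ->
    #|[set K in cliques_of_order e w | (x \in K) && (y \in K)]| = 1%N.

Definition max_degree (T : finType) (e : rel T) : nat :=
  \max_(x : T) #|[set y | e x y]|.

(* Adjacency matrix (over a ring R) of the w-clique graph C_w(Gamma):
   vertices are the cliques of order w (enumerated by 'I_#|cliques|),
   two distinct ones adjacent iff they intersect. *)
Definition clique_graph_adj (R : nzRingType) (T : finType) (e : rel T) (w : nat)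
  : 'M[R]_#|cliques_of_order e w| :=
  \matrix_(i, j)
    ((enum_val i != enum_val j) &&
     (enum_val i :&: enum_val j != set0) :> nat)%:R%R.

From HB Require Import structures.
From mathcomp Require Import all_boot all_order all_algebra.
Import Order.TTheory GRing.Theory Num.Theory.
Set Implicit Arguments. Unset Strict Implicit. Unset Printing Implicit Defensive.

(* Let N be the vertex-clique incidence matrix of Gamma. Two distinct
   w-cliques share at most one vertex (an edge lies in only one of them), so
   N^T N = w I + A with A the adjacency matrix of C_w(Gamma). Hence A + w I is
   positive semidefinite, which gives lambda >= -w. For the upper bound, an
   eigenvector v of A yields u = N v with N N^T u = (lambda + w) u; reading
   this at a vertex x where |u x| is maximal gives lambda + w <= w r, where r
   is the largest number of w-cliques through a vertex. Finally the w-cliques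
   through x, with x removed, are disjoint subsets of the neighbourhood of x,
   so r (w - 1) <= Delta. *)

Section CliqueRegular.
Variables (T : finType) (e : rel T) (w : nat).
Hypothesis hreg : clique_regular e w.
Local Notation C := (cliques_of_order e w).

Lemma clique_card K : K \in C -> #|K| = w.
Proof. by rewrite inE => /andP[/eqP]. Qed.

Lemma clique_edge K x y : K \in C -> x \in K -> y \in K -> x != y -> e x y.
Proof.
rewrite inE => /andP[_ /forall_inP K_adj] xK yK.
by have /forall_inP/(_ y yK)/implyP := K_adj x xK.
Qed.

Lemma cliques_meet_le1 K1 K2 : K1 \in C -> K2 \in C -> K1 != K2 ->
  #|K1 :&: K2| <= 1.
Proof.
move=> K1C K2C; rewrite leqNgt; apply: contra => /card_gt1P[x [y []]].
rewrite !inE => /andP[xK1 xK2] /andP[yK1 yK2] xy.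
have /eqP/cards1P[K0 K0_uniq] := hreg.2 x y (clique_edge K1C xK1 yK1 xy).
have through_xy K : K \in C -> x \in K -> y \in K -> K = K0.
  by move=> KC xK yK; apply/set1P; rewrite -K0_uniq inE KC xK yK.
by rewrite (through_xy K1) // (through_xy K2).
Qed.

Lemma cliques_through_degree x :
  #|[set K in C | x \in K]| * (w - 1) <= #|[set y | e x y]|.
Proof.
have card_Dx K : K \in [set K in C | x \in K] -> #|K :\ x| = w - 1.
  rewrite inE => /andP[KC xK].
  by have := cardsD1 x K; rewrite xK clique_card // => ->; rewrite add1n subn1.
rewrite -sum_nat_const -(eq_bigr _ card_Dx).
under eq_bigr => K _ do rewrite -sum1_card.
rewrite (exchange_big_dep (e x)) /= => [|K y]; last first.
  rewrite inE => /andP[KC xK]; rewrite !inE => /andP[yx yK].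
  by apply: (clique_edge KC xK yK); rewrite eq_sym.
rewrite -sum1dep_card; apply: leq_sum => y exy.
rewrite sum1dep_card -(hreg.2 x y exy); apply: subset_leq_card.
by apply/subsetP => K; rewrite !inE => /andP[/andP[-> ->] /andP[_ ->]].
Qed.

Lemma max_cliques_through_degree :
  (\max_x #|[set K in C | x \in K]|) * (w - 1) <= max_degree e.
Proof.
elim/big_ind: _ => [//|r1 r2 le1 le2|x _]; first by rewrite maxnMl geq_max le1.
exact: leq_trans (cliques_through_degree x) (leq_bigmax x).
Qed.

Lemma card_cliques_through (x : T) :
  #|[set i : 'I_#|C| | x \in enum_val i]| = #|[set K in C | x \in K]|.
Proof.
rewrite -(card_imset _ enum_val_inj); apply: eq_card => K.
rewrite inE; apply/imsetP/andP => [[i] | [KC xK]].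
  by rewrite inE => xi ->; rewrite enum_valP.
by exists (enum_rank_in KC K); rewrite ?inE enum_rankK_in.
Qed.

End CliqueRegular.

Local Open Scope ring_scope.

Definition meet_adj (R : nzRingType) (T : finType) (n : nat)
    (K : 'I_n -> {set T}) : 'M[R]_n :=
  \matrix_(i, j) ((i != j) && (K i :&: K j != set0) : nat)%:R.

Lemma clique_graph_adjE (R : nzRingType) (T : finType) (e : rel T) (w : nat) :
  clique_graph_adj R e w =
  meet_adj R (fun i : 'I_#|cliques_of_order e w| => enum_val i).
Proof. by apply/matrixP => i j; rewrite !mxE (inj_eq enum_val_inj). Qed.

Section LinearFamily.
Variables (R : rcfType) (T : finType) (n w : nat) (K : 'I_n -> {set T}).
Hypothesis card_K : forall i, #|K i| = w.
Hypothesis meet_K : forall i j, i != j -> (#|K i :&: K j| <= 1)%N.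

Local Notation A := (meet_adj R K).

Definition replication (x : T) : nat := #|[set i | x \in K i]|.

Lemma card_meetE i j :
  #|K i :&: K j|%:R = (i == j)%:R * w%:R + A i j :> R.
Proof.
rewrite mxE; have [<-|nij] /= := eqVneq i j.
  by rewrite setIid card_K mul1r addr0.
rewrite mul0r add0r; congr _%:R.
have [->|/set0Pn[x x_ij]] := eqVneq (K i :&: K j) set0; first by rewrite cards0.
by apply/eqP; rewrite eqn_leq meet_K // card_gt0; apply/set0Pn; exists x.
Qed.

Section Eigenvector.
Variables (lam : R) (v : 'rV[R]_n).
Hypotheses (eig_v : v *m A = lam *: v) (v_neq0 : v != 0).

Let u x := \sum_(i | x \in K i) v 0 i.

Lemma sum_u_block j : \sum_(y in K j) u y = (lam + w%:R) * v 0 j.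
Proof.
rewrite (exchange_big_dep predT) //=.
under eq_bigr => i _.
  rewrite (eq_bigl [in K i :&: K j]) => [|y]; last by rewrite inE andbC.
  rewrite sumr_const -mulr_natl card_meetE mulrDl; over.
rewrite big_split /= (bigD1 j) //= eqxx mul1r big1 ?addr0 => [|i /negbTE->].
  2: by rewrite !mul0r.
have /rowP/(_ j) := eig_v; rewrite !mxE => eig_j.
rewrite mulrDl addrC mulrC -eig_j; congr (_ + _).
by apply: eq_bigr => i _; rewrite mulrC.
Qed.

Lemma sum_u_sqr : \sum_x u x ^+ 2 = (lam + w%:R) * \sum_i v 0 i ^+ 2.
Proof.
under eq_bigr => x _ do rewrite expr2 {2}/u mulr_sumr.
rewrite (exchange_big_dep predT) //= mulr_sumr.
by apply: eq_bigr => i _; rewrite -mulr_suml sum_u_block -mulrA -expr2.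
Qed.

Lemma eigen_shift_ge0 : 0 <= lam + w%:R.
Proof.
have /rV0Pn[i0 vi0] := v_neq0.
have v2_gt0 : 0 < \sum_i v 0 i ^+ 2.
  rewrite (bigD1 i0) //= ltr_wpDr //.
    by apply: sumr_ge0 => i _; apply: sqr_ge0.
  by rewrite lt0r sqrf_eq0 vi0 sqr_ge0.
rewrite -(pmulr_lge0 _ v2_gt0) -sum_u_sqr.
by apply: sumr_ge0 => x _; apply: sqr_ge0.
Qed.

Lemma norm_u_le (B : R) : (forall y, `|u y| <= B) ->
  forall x, `|(lam + w%:R) * u x| <= (replication x * w)%:R * B.
Proof.
move=> u_le x; rewrite /u mulr_sumr.
under eq_bigr => i _ do rewrite -sum_u_block.
apply: le_trans (ler_norm_sum _ _ _) _.
apply: (@le_trans _ _ (\sum_(i | x \in K i) B *+ w)).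
  apply: ler_sum => i _; apply: le_trans (ler_norm_sum _ _ _) _.
  by rewrite -(card_K i) -sumr_const; apply: ler_sum => y _.
by rewrite sumr_const -mulrnA mulr_natl /replication cardsE mulnC.
Qed.

Lemma eigen_shift_le : lam + w%:R <= w%:R * (\max_x replication x)%:R.
Proof.
have rhs_ge0 : 0 <= w%:R * (\max_x replication x)%:R :> R by rewrite mulr_ge0.
have [u0|/forallPn[x0 ux0]] := boolP [forall x, u x == 0].
  have /rV0Pn[i0 vi0] := v_neq0.
  have := sum_u_block i0; rewrite big1 => [|y _]; last exact/eqP/(forallP u0).
  by move/esym/eqP; rewrite mulf_eq0 (negbTE vi0) orbF => /eqP->.
have [xm _ u_max] := @arg_maxP _ _ T x0 predT (fun x => `|u x|) isT.
have M_gt0 : 0 < `|u xm| by rewrite (lt_le_trans _ (u_max x0 isT)) ?normr_gt0.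
rewrite -(ler_pM2r M_gt0); apply: le_trans (ler_norm _) _.
rewrite normrM normr_id -normrM.
apply: le_trans (norm_u_le (fun y => u_max y isT) xm) _.
rewrite ler_pM2r // natrM mulrC ler_wpM2l // ler_nat.
exact: leq_bigmax.
Qed.

End Eigenvector.

Lemma meet_adj_eigenvalue_bounds lam : eigenvalue A lam ->
  - w%:R <= lam /\ lam + w%:R <= w%:R * (\max_x replication x)%:R.
Proof.
case/eigenvalueP => v eig_v v_neq0.
split; last exact: eigen_shift_le eig_v v_neq0.
by rewrite -subr_ge0 opprK (eigen_shift_ge0 eig_v v_neq0).
Qed.

End LinearFamily.

Theorem corollary2 (R : rcfType) (T : finType) (e : rel T) (w : nat)
  (hw : (2 <= w)%N) (hsimple : simple_graph e) (hreg : clique_regular e w)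
  (lambda : R) (hlam : eigenvalue (clique_graph_adj R e w) lambda) :
  - (w%:R) <= lambda /\
  lambda <= w%:R * ((max_degree e)%:R / (w%:R - 1) - 1).
Proof.
have card_K (i : 'I_#|cliques_of_order e w|) : #|enum_val i| = w.
  exact: clique_card (enum_valP i).
have meet_le1 (i j : 'I_#|cliques_of_order e w|) :
    i != j -> (#|enum_val i :&: enum_val j| <= 1)%N.
  rewrite -(inj_eq enum_val_inj).
  by apply: (cliques_meet_le1 hreg); rewrite ?enum_valP.
rewrite clique_graph_adjE in hlam.
have [lam_ge lam_le] := meet_adj_eigenvalue_bounds card_K meet_le1 hlam.
split=> //; rewrite mulrBr mulr1 lerBrDr; apply: le_trans lam_le _.
have w1_gt0 : 0 < w%:R - 1 :> R by rewrite subr_gt0 ltr1n.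
rewrite ler_wpM2l // ler_pdivlMr // -(natrB _ (ltnW hw)) -natrM ler_nat.
under eq_bigr => x _ do rewrite /replication card_cliques_through.
exact: max_cliques_through_degree.
Qed.
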